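(* Let $G=(V,E)$ be a finite graph with couplings $J_e>0$, $p_e=1-e^{-2J_e}$. Let $\Omega=\{0,1\}^E$, $\Sigma=\{-1,+1\}^V$, $f:\Omega\to2^\Sigma$, $f(\omega)=\{\sigma\in\Sigma\mid\omega_e=0\ \forall e\notin S(\sigma)\}$. For $A\subset V$ with $|A|$ even let $\rho[\omega]\propto\mathbf{1}[\omega\in\mathcal{F}_A]\mathbb{P}_p[\omega]$ and $\gamma[\sigma]\propto1$. Let $\mathscr{P}$ be the probability measure on $\Omega\times\Sigma$ with $\mathscr{P}[\omega,\sigma]\propto\rho[\omega]\gamma[\sigma]\mathbf{1}[\sigma\in f(\omega)]$. Then: (a) The marginal of $\mathscr{P}$ on $\Sigma$ is $\mu^A$ given by $\mu^A[\sigma]\propto\mu[\sigma]\,\mathbb{P}_{S(\sigma),p}[\mathcal{F}_A]$. For each $\omega\in\mathcal{F}_A$, $\mathscr{P}[\cdot\mid\omega]$ is obtained by assigning independent uniform signs to the open clusters of $\omega$. (b) The marginal of $\mathscr{P}$ on $\Omega$ is $\phi_p[\cdot\mid\mathcal{F}_A]$. For each $\sigma$ with $S(\sigma)\in\mathcal{F}_A$, $\mathscr{P}[\cdot\mid\sigma]=\mathbb{P}_{S(\sigma),p}[\cdot\mid\mathcal{F}_A]$.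
   Context: Configurations are identified with sets of open edges; open clusters are the components of $(V,\omega)$, $\kappa(\omega)$ their number (isolated vertices included). $S(\sigma)=\{uv\in E\mid\sigma_u=\sigma_v\}$. $\partial F$ is the set of odd-degree vertices of $(V,F)$; $\mathcal{F}_A=\{\omega\subset E\mid\exists F\subset\omega,\ \partial F=A\}$. $\mathbb{P}_p$ is Bernoulli percolation on $E$ with parameters $(p_e)$; $\mathbb{P}_{H,p}$ is Bernoulli percolation with parameters $p$ on the edges of $H$ and all other edges closed. $\mu[\sigma]\propto\exp(\sum_{uv\in E}J_{uv}\sigma_u\sigma_v)$ is the Ising measure. $\phi_p[\omega]\propto2^{\kappa(\omega)}\prod_{e\in\omega}p_e\prod_{e\notin\omega}(1-p_e)$ is the random-cluster measure with $q=2$. *)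

From HB Require Import structures.
From mathcomp Require Import all_boot all_order all_algebra.
From mathcomp Require Import all_classical all_reals all_analysis.
Set Implicit Arguments. Unset Strict Implicit. Unset Printing Implicit Defensive.
Import Order.TTheory GRing.Theory Num.Theory.
Local Open Scope ring_scope.

(* Conventions.
   - V : finType is the vertex set; an edge is a 2-element subset {u,v} of V,
     the edge set is E : {set {set V}} (a finite simple graph).
   - A percolation configuration omega is identified with its set of open
     edges, omega : {set {set V}}; Omega = subsets of E.
   - A spin configuration is sigma : {ffun V -> bool}, true = +1, false = -1.
   - "x proportional to w" is rendered by explicit normalisation. *)

Section Defs.
Variable R : realType.
Variable V : finType.

Definition edge_set := {set {set V}}.
Definition spin_conf := {ffun V -> bool}.

Definition normalize (T : finType) (w : T -> R) (x : T) : R :=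
  w x / \sum_(y : T) w y.

Definition spin (b : bool) : R := if b then 1 else -1.

Definition pJ (J : {set V} -> R) (e : {set V}) : R := 1 - expR (- (2 * J e)).

Definition Sset (E : edge_set) (sigma : spin_conf) : edge_set :=
  [set e in E | [forall u in e, forall v in e, sigma u == sigma v]].

Definition deg (F : edge_set) (v : V) : nat := #|[set e in F | v \in e]|.
Definition boundary (F : edge_set) : {set V} := [set v | odd (deg F v)].

Definition FA (A : {set V}) (omega : edge_set) : bool :=
  [exists F : edge_set, (F \subset omega) && (boundary F == A)].

Definition adj (omega : edge_set) : rel V := fun u v => [set u; v] \in omega.
Definition kappa (omega : edge_set) : nat :=
  n_comp (connect (adj omega)) (fun _ : V => true).

Definition PH (p : {set V} -> R) (H : edge_set) (omega : edge_set) : R :=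
  (omega \subset H)%:R *
  (\prod_(e in omega) p e) * (\prod_(e in H :\: omega) (1 - p e)).

Definition PE (p : {set V} -> R) (E : edge_set) (omega : edge_set) : R :=
  PH p E omega.

Definition PH_event (p : {set V} -> R) (H : edge_set) (ev : pred edge_set) : R :=
  \sum_(omega : edge_set | ev omega) PH p H omega.

Definition ising_w (E : edge_set) (J : {set V} -> R) (sigma : spin_conf) : R :=
  expR (\sum_(e in E) J e * \prod_(v in e) spin (sigma v)).
Definition mu (E : edge_set) (J : {set V} -> R) (sigma : spin_conf) : R :=
  normalize (ising_w E J) sigma.

Definition phi (E : edge_set) (p : {set V} -> R) (omega : edge_set) : R :=
  normalize (fun w => 2 ^+ kappa w * PE p E w) omega.

Definition cond_event (m : edge_set -> R) (ev : pred edge_set) (omega : edge_set) : R :=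
  (ev omega)%:R * m omega / \sum_(w : edge_set | ev w) m w.

Definition fmap (E : edge_set) (omega : edge_set) : {set spin_conf} :=
  [set sigma : spin_conf | [forall e in E, (e \notin Sset E sigma) ==> (e \notin omega)]].

Definition rho (E : edge_set) (p : {set V} -> R) (A : {set V}) (omega : edge_set) : R :=
  normalize (fun w => (FA A w)%:R * PE p E w) omega.
Definition gamma (sigma : spin_conf) : R := normalize (fun _ : spin_conf => 1) sigma.

Definition Pjoint (E : edge_set) (p : {set V} -> R) (A : {set V})
  (omega : edge_set) (sigma : spin_conf) : R :=
  normalize (fun x : edge_set * spin_conf =>
      rho E p A x.1 * gamma x.2 * (x.2 \in fmap E x.1)%:R) (omega, sigma).

Definition Pcond_omega E p A (omega : edge_set) (sigma : spin_conf) : R :=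
  Pjoint E p A omega sigma / \sum_(s : spin_conf) Pjoint E p A omega s.
Definition Pcond_sigma E p A (sigma : spin_conf) (omega : edge_set) : R :=
  Pjoint E p A omega sigma / \sum_(w : edge_set) Pjoint E p A w sigma.

Definition muA (E : edge_set) (J : {set V} -> R) (A : {set V}) (sigma : spin_conf) : R :=
  normalize (fun s => mu E J s * PH_event (pJ J) (Sset E s) (FA A)) sigma.

(* law of the spin configuration obtained by assigning independent uniform
   signs to the open clusters of omega: draw independent uniform signs tau(x)
   for all vertices x and give every vertex the sign of the root (canonical
   representative) of its open cluster. *)
Definition cluster_sign_law (omega : edge_set) (sigma : spin_conf) : R :=
  #|[set tau : {ffun V -> bool} |
      [ffun v => tau (fingraph.root (connect (adj omega)) v)] == sigma]|%:R
  / 2 ^+ #|V|.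

End Defs.

From Pilot Require Import Defs.
From HB Require Import structures.
From mathcomp Require Import all_boot all_order all_algebra.
From mathcomp Require Import all_classical all_reals all_analysis.
From mathcomp Require Import ring.
Import Order.TTheory GRing.Theory Num.Theory.
Local Open Scope ring_scope.

(* Up to a constant, the coupling has weight
   W(omega, sigma) = 1[omega in F_A] P_p[omega] 1[sigma in f(omega)].
   For fixed omega, sigma is in f(omega) iff sigma is constant on the open clusters
   of omega, so W(omega, .) is uniform on a set of 2^kappa(omega) configurations,
   which is also the law of independent uniform cluster signs; summing over sigma
   gives the random-cluster weight 2^kappa(omega) P_p[omega] restricted to F_A.
   For fixed sigma and omega inside E, sigma is in f(omega) iff omega is contained
   in S(sigma), and then
     P_p[omega] = prod_(e in E \ S(sigma)) (1 - p_e) * P_(S(sigma),p)[omega];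
   since 1 - p_e = exp(-2 J_e) and sigma_u sigma_v = +-1, that product is
   exp(-sum_e J_e) times the Ising weight of sigma. *)

Section Normalize.
Context {R : realType} {T : finType}.
Implicit Types (w : T -> R).

Lemma normalizeZ (c : R) w x : (c = 0 -> forall y, w y = 0) ->
  normalize (fun y => c * w y) x = normalize w x.
Proof.
rewrite /normalize; have [-> /(_ erefl) w0 | c0 _] := eqVneq c 0.
  by rewrite w0 !mul0r.
by rewrite -mulr_sumr -mulf_div divff // mul1r.
Qed.

Lemma normalizeMl w (f : T -> R) x : (forall y, 0 <= w y) ->
  normalize (fun y => normalize w y * f y) x = normalize (fun y => w y * f y) x.
Proof.
move=> w_ge0.
have -> : (fun y => normalize w y * f y) = (fun y => (\sum_z w z)^-1 * (w y * f y)).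
  by apply/funext => y; rewrite /normalize mulrAC mulrC.
apply: normalizeZ => /eqP; rewrite invr_eq0 => /eqP Z0 y.
by rewrite (psumr_eq0P (fun z _ => w_ge0 z) Z0) ?mul0r.
Qed.

Lemma normalize_ratio {I : finType} w (g : I -> T) x : (forall y, 0 <= w y) ->
  normalize w x / \sum_i normalize w (g i) = w x / \sum_i w (g i).
Proof.
move=> w_ge0; rewrite /normalize -mulr_suml.
have [Z0 | Z0] := eqVneq (\sum_y w y) 0.
  by rewrite (psumr_eq0P (fun y _ => w_ge0 y) Z0) // !mul0r.
by rewrite -mulf_div divff ?mulr1 ?invr_eq0.
Qed.

Lemma sum_indicator (P : pred T) (F : T -> R) :
  \sum_(x | P x) F x = \sum_x F x * (P x)%:R.
Proof.
by rewrite big_mkcond; apply: eq_bigr => x _; case: (P x); rewrite ?mulr1 ?mulr0.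
Qed.

Lemma sum_indicator_card (B : {set T}) : \sum_x (x \in B)%:R = #|B|%:R :> R.
Proof.
rewrite -sum1_card natr_sum [RHS]sum_indicator.
by apply: eq_bigr => x _; rewrite mul1r.
Qed.

End Normalize.

Section NormalizePair.
Context {R : realType} {T U : finType} (w : T * U -> R).

Lemma sum_normalize_pair2 (t : T) :
  \sum_u normalize w (t, u) = normalize (fun t' => \sum_u w (t', u)) t.
Proof.
rewrite /normalize -mulr_suml pair_bigA /=.
by congr (_ * _^-1); apply: eq_bigr => -[a b] _.
Qed.

Lemma sum_normalize_pair1 (u : U) :
  \sum_t normalize w (t, u) = normalize (fun u' => \sum_t w (t, u')) u.
Proof.
rewrite /normalize -mulr_suml exchange_big pair_bigA /=.
by congr (_ * _^-1); apply: eq_bigr => -[a b] _.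
Qed.

End NormalizePair.

Lemma cond_eventE {R : realType} {V : finType} (m : edge_set V -> R) ev omega :
  cond_event m ev omega = normalize (fun w => m w * (ev w)%:R) omega.
Proof.
by rewrite /cond_event /normalize (sum_indicator ev) [(ev omega)%:R * _]mulrC.
Qed.

Section Percolation.
Context {R : realType} {V : finType} (p : {set V} -> R).
Implicit Types (E H omega : edge_set V).

Lemma PH_eq0 H omega : ~~ (omega \subset H) -> PH p H omega = 0.
Proof. by move=> /negbTE homega; rewrite /PH homega !mul0r. Qed.

Lemma PH_ge0 H omega : {in H, forall e, 0 <= p e <= 1} -> 0 <= PH p H omega.
Proof.
move=> p01; have [homega|/PH_eq0 -> //] := boolP (omega \subset H).
rewrite /PH homega mul1r; apply: mulr_ge0; apply: prodr_ge0 => e.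
  by move=> /(fintype.subsetP homega)/p01/andP[].
by rewrite finset.in_setD => /andP[_ /p01/andP[_]]; rewrite subr_ge0.
Qed.

Lemma PH_gt0 H omega : {in H, forall e, 0 < p e < 1} -> omega \subset H ->
  0 < PH p H omega.
Proof.
move=> p01 homega; rewrite /PH homega mul1r; apply: mulr_gt0; apply: prodr_gt0 => e.
  by move=> /(fintype.subsetP homega)/p01/andP[].
by rewrite finset.in_setD => /andP[_ /p01/andP[_]]; rewrite subr_gt0.
Qed.

Lemma PH_split E H omega : H \subset E -> omega \subset H ->
  PH p E omega = (\prod_(e in E :\: H) (1 - p e)) * PH p H omega.
Proof.
move=> hHE homega; have homegaE := fintype.subset_trans homega hHE.
rewrite /PH homega homegaE !mul1r mulrCA; congr (_ * _).
rewrite (bigID (mem H)) /= mulrC; congr (_ * _); apply: eq_bigl => e.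
  rewrite !finset.in_setD; case: (boolP (e \in H)) => heH; rewrite ?andbT ?andbF //=.
  by rewrite (contra (fintype.subsetP homega e) heH).
rewrite !finset.in_setD; case: (boolP (e \in H)) => heH; rewrite ?andbT ?andbF //=.
by rewrite (fintype.subsetP hHE e heH) andbT.
Qed.

Lemma PH_eventE H (ev : pred (edge_set V)) :
  PH_event p H ev = \sum_omega PH p H omega * (ev omega)%:R.
Proof. exact: sum_indicator. Qed.

End Percolation.

Section Clusters.
Context {V : finType} (r : rel V).
Hypothesis r_sym : symmetric r.
Implicit Types sigma : spin_conf V.

Local Notation root := (fingraph.root (connect r)).

Definition cluster_spins : {set spin_conf V} :=
  [set sigma : spin_conf V | [ffun v => sigma (root v)] == sigma].

Definition cluster_fibre (sigma : spin_conf V) : {set {ffun V -> bool}} :=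
  [set tau : {ffun V -> bool} | [ffun v => tau (root v)] == sigma].

Let connect_sym_r : connect_sym (connect r).
Proof. exact: sym_connect_sym (sym_connect_sym r_sym). Qed.

Lemma cluster_spins_root sigma v : sigma \in cluster_spins -> sigma (root v) = sigma v.
Proof. by rewrite inE => /eqP {2}<-; rewrite ffunE. Qed.

Lemma cluster_spinsP sigma :
  reflect (forall u v, r u v -> sigma u = sigma v) (sigma \in cluster_spins).
Proof.
apply: (iffP idP) => [hsigma u v ruv | hconst].
  rewrite -(cluster_spins_root _ u hsigma) -(cluster_spins_root _ v hsigma).
  by congr (sigma _); apply/(fingraph.rootP connect_sym_r)/connect1/connect1.
have r_closed : fingraph.closed r [pred z | sigma z].
  by move=> x y /hconst; rewrite !inE => ->.
have connect_closed : fingraph.closed (connect r) [pred z | sigma z].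
  by move=> x y /(closed_connect r_closed).
rewrite inE; apply/eqP/ffunP => v; rewrite ffunE.
by have := closed_connect connect_closed (connect_root _ v); rewrite !inE => ->.
Qed.

Lemma cluster_fibre_spins sigma tau :
  tau \in cluster_fibre sigma -> sigma \in cluster_spins.
Proof.
rewrite !inE => /eqP <-; apply/eqP/ffunP => v.
by rewrite !ffunE (fingraph.root_root connect_sym_r).
Qed.

Lemma card_cluster_fibre_eq0 sigma :
  sigma \notin cluster_spins -> #|cluster_fibre sigma| = 0%N.
Proof.
move=> hsigma; apply: contraNeq hsigma; rewrite cards_eq0 => /set0Pn[tau].
exact: cluster_fibre_spins.
Qed.

Lemma card_cluster_fibre_le sigma1 sigma2 :
  sigma1 \in cluster_spins -> sigma2 \in cluster_spins ->
  (#|cluster_fibre sigma1| <= #|cluster_fibre sigma2|)%N.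
Proof.
move=> h1 h2.
(* Flipping the spins where sigma1 and sigma2 differ maps one fibre into the other. *)
pose g (tau : {ffun V -> bool}) := [ffun x => tau x (+) sigma1 x (+) sigma2 x].
have gK : involutive g.
  move=> tau; apply/ffunP => x; rewrite !ffunE.
  by case: (tau x) (sigma1 x) (sigma2 x) => [] [] [].
rewrite -(card_imset _ (inv_inj gK)); apply: subset_leq_card.
apply/fintype.subsetP => _ /imsetP[tau + ->]; rewrite !inE => /eqP tau_sigma1.
apply/eqP/ffunP => v; have := congr1 (fun f : spin_conf V => f v) tau_sigma1.
rewrite !ffunE => ->.
by rewrite !cluster_spins_root //; case: (sigma1 v) (sigma2 v) => [] [].
Qed.

Lemma sum_card_cluster_fibre : (\sum_sigma #|cluster_fibre sigma| = 2 ^ #|V|)%N.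
Proof.
pose proj (tau : {ffun V -> bool}) : spin_conf V := [ffun v => tau (root v)].
transitivity (\sum_(tau : {ffun V -> bool}) 1)%N.
  rewrite [RHS](partition_big proj predT) //=; apply: eq_bigr => sigma _.
  by rewrite sum1dep_card; apply: eq_card => tau; rewrite inE.
by rewrite sum1_card card_ffun card_bool.
Qed.

Lemma card_cluster_fibre sigma :
  (#|cluster_fibre sigma| * #|cluster_spins| = (sigma \in cluster_spins) * 2 ^ #|V|)%N.
Proof.
have [hsigma | /card_cluster_fibre_eq0 -> //] := boolP (sigma \in cluster_spins).
rewrite mul1n -sum_card_cluster_fibre (bigID (mem cluster_spins)) /=.
rewrite [X in (_ + X)%N]big1 => [|s /card_cluster_fibre_eq0 //].
rewrite addn0 mulnC -sum_nat_const; apply: eq_bigr => s hs.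
by apply/eqP; rewrite eqn_leq !card_cluster_fibre_le.
Qed.

Lemma card_cluster_spins : #|cluster_spins| = (2 ^ n_comp (connect r) predT)%N.
Proof.
set K := [set x | fingraph.roots (connect r) x].
have -> : n_comp (connect r) predT = #|K| by apply: eq_card => x; rewrite !inE andbT.
pose h (S : {set V}) : spin_conf V := [ffun v => root v \in S].
have h_inj : {in powerset K &, injective h}.
  move=> S1 S2; rewrite !powersetE => /fintype.subsetP sub1 /fintype.subsetP sub2 h12.
  apply/finset.setP => x; have [xK | xK] := boolP (x \in K).
    have root_x : root x = x by move: xK; rewrite inE => /eqP.
    by have := congr1 (fun f : spin_conf V => f x) h12; rewrite !ffunE root_x.
  by rewrite (contraNF (sub1 x) xK) (contraNF (sub2 x) xK).
rewrite -card_powerset -(card_in_imset h_inj); apply: eq_card => sigma.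
apply/idP/imsetP => [hsigma | [S _ ->]].
  exists [set x in K | sigma x].
    by rewrite powersetE; apply/fintype.subsetP => x; rewrite inE => /andP[].
  apply/ffunP => v; rewrite ffunE !inE (fingraph.roots_root connect_sym_r) /=.
  by rewrite cluster_spins_root.
by rewrite inE; apply/eqP/ffunP => v; rewrite !ffunE (fingraph.root_root connect_sym_r).
Qed.

End Clusters.

Lemma adj_sym {V : finType} (omega : edge_set V) : symmetric (adj omega).
Proof. by move=> u v; rewrite /adj finset.setUC. Qed.

Lemma cluster_sign_lawE (R : realType) {V : finType} (omega : edge_set V) sigma :
  cluster_sign_law R omega sigma =
  (sigma \in cluster_spins (adj omega))%:R / #|cluster_spins (adj omega)|%:R.
Proof.
have C_gt0 : (0 < #|cluster_spins (adj omega)|)%N.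
  by rewrite (card_cluster_spins _ (adj_sym omega)) expn_gt0.
rewrite /cluster_sign_law -natrX; apply/eqP.
rewrite eqr_div ?pnatr_eq0 ?expn_eq0 -?lt0n // -!natrM.
by rewrite (card_cluster_fibre _ (adj_sym omega)).
Qed.

Section EdgeSets.
Context {V : finType} (E : edge_set V).
Implicit Types (omega : edge_set V) (sigma : spin_conf V).

Lemma Sset_sub sigma : Sset E sigma \subset E.
Proof. by apply/fintype.subsetP => e; rewrite inE => /andP[]. Qed.

Lemma in_Sset2 sigma x y :
  ([set x; y] \in Sset E sigma) = ([set x; y] \in E) && (sigma x == sigma y).
Proof.
rewrite inE; congr andb; apply/forall_inP/eqP => [hS | hxy].
  by move/forall_inP: (hS x (set21 x y)) => /(_ y (set22 x y))/eqP.
by move=> u /set2P[] -> ; apply/forall_inP => v /set2P[] ->; rewrite ?hxy.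
Qed.

Lemma fmap_subsetE omega sigma : omega \subset E ->
  (sigma \in Defs.fmap E omega) = (omega \subset Sset E sigma).
Proof.
move=> /fintype.subsetP omegaE; rewrite inE.
apply/forall_inP/fintype.subsetP => [hf e he | hsub e _].
  by apply/negPn/negP => heS; have := hf e (omegaE e he); rewrite heS he.
by apply/implyP; apply: contra; apply: hsub.
Qed.

Hypothesis E_pairs : forall e, e \in E -> #|e| = 2%N.

Lemma spin_prod_edge (R : realType) sigma e : e \in E ->
  \prod_(v in e) spin R (sigma v) = if e \in Sset E sigma then 1 else -1.
Proof.
move=> heE; have /eqP/cards2P[x [y [xy exy]]] := E_pairs _ heE.
rewrite exy big_setU1 ?big_set1 ?finset.in_set1 // in_Sset2 -exy heE /=.
by rewrite /spin; case: (sigma x) (sigma y) => [] [] /=; rewrite ?mulrNN ?mulr1 ?mul1r.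
Qed.

Lemma fmapP omega sigma : omega \subset E ->
  reflect (forall u v, adj omega u v -> sigma u = sigma v) (sigma \in Defs.fmap E omega).
Proof.
move=> omegaE; rewrite fmap_subsetE //.
apply: (iffP fintype.subsetP) => [hsub u v /hsub | hconst e he].
  by rewrite in_Sset2 => /andP[_ /eqP].
have heE := fintype.subsetP omegaE e he.
have /eqP/cards2P[x [y [_ exy]]] := E_pairs _ heE.
rewrite exy in_Sset2 -exy heE; apply/eqP/hconst.
by rewrite /adj -exy.
Qed.

Lemma fmap_cluster_spins omega : omega \subset E ->
  Defs.fmap E omega = cluster_spins (adj omega).
Proof.
move=> omegaE; apply/finset.setP => sigma.
exact/(fmapP _ _ omegaE)/(cluster_spinsP _ (adj_sym omega)).
Qed.

Lemma card_fmap omega : omega \subset E -> #|Defs.fmap E omega| = (2 ^ kappa omega)%N.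
Proof.
by move=> omegaE; rewrite fmap_cluster_spins // (card_cluster_spins _ (adj_sym omega)).
Qed.

End EdgeSets.

Section IsingEdgeProbability.
Context {R : realType} {V : finType} (J : {set V} -> R).

Lemma oneB_pJ e : 1 - pJ J e = expR (- (2 * J e)).
Proof. by rewrite /pJ opprB addrC subrK. Qed.

Lemma pJ_in01 e : 0 < J e -> 0 < pJ J e < 1.
Proof.
move=> Je_gt0; apply/andP; split; last by rewrite -subr_gt0 oneB_pJ expR_gt0.
by rewrite /pJ subr_gt0 expR_lt1 oppr_lt0 mulr_gt0.
Qed.

End IsingEdgeProbability.

Definition cut_weight {R : realType} {V : finType} (p : {set V} -> R) (E : edge_set V)
  (sigma : spin_conf V) : R :=
  \prod_(e in E :\: Sset E sigma) (1 - p e).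

Lemma PE_mul_fmap {R : realType} {V : finType} (p : {set V} -> R) E omega sigma :
  PE p E omega * (sigma \in Defs.fmap E omega)%:R =
  cut_weight p E sigma * PH p (Sset E sigma) omega.
Proof.
have SE := Sset_sub E sigma.
have [omegaE | omegaNE] := boolP (omega \subset E); last first.
  rewrite /PE !PH_eq0 ?mul0r ?mulr0 //.
  by apply: contra omegaNE => /fintype.subset_trans; apply.
rewrite fmap_subsetE //; have [omegaS | omegaNS] := boolP (omega \subset Sset E sigma).
  by rewrite mulr1 /PE; apply: PH_split.
by rewrite mulr0 PH_eq0 ?mulr0.
Qed.

Lemma cut_weight_pJ_gt0 {R : realType} {V : finType} (J : {set V} -> R) E sigma :
  0 < cut_weight (pJ J) E sigma.
Proof. by apply: prodr_gt0 => e _; rewrite oneB_pJ expR_gt0. Qed.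

Lemma cut_weight_ising {R : realType} {V : finType} (E : edge_set V) (J : {set V} -> R)
    (E_pairs : forall e, e \in E -> #|e| = 2%N) sigma :
  cut_weight (pJ J) E sigma = expR (- \sum_(e in E) J e) * ising_w E J sigma.
Proof.
rewrite /cut_weight /ising_w.
under eq_bigr => e _ do rewrite oneB_pJ.
rewrite -expR_sum -expRD; congr expR.
transitivity (\sum_(e in E) (if e \in Sset E sigma then 0 else - (2 * J e))).
  rewrite big_mkcond [RHS]big_mkcond; apply: eq_bigr => e _.
  by rewrite finset.in_setD; case: (e \in Sset E sigma); case: (e \in E).
rewrite -sumrN -big_split; apply: eq_bigr => e heE.
by rewrite (spin_prod_edge _ E_pairs) //; case: ifP => _ /=; ring.
Qed.

Section Coupling.
Context {R : realType} {V : finType} (E : edge_set V) (J : {set V} -> R) (A : {set V}).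
Hypothesis E_pairs : forall e, e \in E -> #|e| = 2%N.
Hypothesis J_gt0 : forall e, e \in E -> 0 < J e.
Implicit Types (omega : edge_set V) (sigma : spin_conf V).

Local Notation p := (pJ J).

Let p_in01 {H : edge_set V} : H \subset E -> {in H, forall e, 0 < p e < 1}.
Proof. by move=> /fintype.subsetP HE e /HE /J_gt0 /pJ_in01. Qed.

Let PE_ge0 omega : 0 <= PE p E omega.
Proof.
by apply: PH_ge0 => e /(p_in01 (fintype.subxx E)) /andP[/ltW -> /ltW ->].
Qed.

Definition coupling_weight omega sigma : R :=
  (FA A omega)%:R * PE p E omega * (sigma \in Defs.fmap E omega)%:R.

Lemma coupling_weight_ge0 omega sigma : 0 <= coupling_weight omega sigma.
Proof. by rewrite mulr_ge0 ?ler0n // mulr_ge0 ?ler0n. Qed.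

Lemma Pjoint_coupling_weight omega sigma :
  Pjoint E p A omega sigma = normalize (fun x => coupling_weight x.1 x.2) (omega, sigma).
Proof.
set Zrho := \sum_w (FA A w)%:R * PE p E w.
set Zgamma := \sum_(s : spin_conf V) (1 : R).
have -> : Pjoint E p A omega sigma =
    normalize (fun x => Zrho^-1 / Zgamma * coupling_weight x.1 x.2) (omega, sigma).
  rewrite /Pjoint; congr normalize; apply/funext => -[w s] /=.
  by rewrite /rho /gamma /normalize /coupling_weight -/Zrho -/Zgamma; ring.
(* The constant vanishes only if P_p[F_A] = 0, and then coupling_weight vanishes too. *)
apply: normalizeZ => /eqP; rewrite mulf_eq0 !invr_eq0 => /orP[/eqP Zrho0 [w s] | ].
  by rewrite /coupling_weight (psumr_eq0P _ Zrho0) ?mul0r // => w' _; apply: mulr_ge0.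
by rewrite /Zgamma sumr_const card_ffun card_bool pnatr_eq0 expn_eq0.
Qed.

Lemma sum_coupling_weight_edges sigma :
  \sum_omega coupling_weight omega sigma =
  cut_weight p E sigma * PH_event p (Sset E sigma) (FA A).
Proof.
rewrite PH_eventE mulr_sumr; apply: eq_bigr => w _.
by rewrite /coupling_weight -mulrA PE_mul_fmap mulrCA; congr (_ * _); rewrite mulrC.
Qed.

Lemma sum_coupling_weight_spins omega :
  \sum_sigma coupling_weight omega sigma =
  2 ^+ kappa omega * PE p E omega * (FA A omega)%:R.
Proof.
rewrite /coupling_weight -mulr_sumr sum_indicator_card -mulrA [RHS]mulrC; congr (_ * _).
have [omegaE | omegaNE] := boolP (omega \subset E).
  by rewrite card_fmap // natrX mulrC.
by rewrite /PE PH_eq0 ?mul0r ?mulr0.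
Qed.

Lemma Pjoint_spin_marginal sigma :
  \sum_omega Pjoint E p A omega sigma = muA E J A sigma.
Proof.
under eq_bigr do rewrite Pjoint_coupling_weight.
rewrite sum_normalize_pair1 /muA /mu normalizeMl => [|s]; last exact/ltW/expR_gt0.
have -> : (fun s => \sum_omega coupling_weight omega s) =
    (fun s => expR (- \sum_(e in E) J e) *
              (ising_w E J s * PH_event p (Sset E s) (FA A))).
  by apply/funext => s; rewrite sum_coupling_weight_edges cut_weight_ising // mulrA.
by apply: normalizeZ => /eqP; rewrite gt_eqF ?expR_gt0.
Qed.

Lemma Pjoint_spin_conditional omega sigma : omega \subset E -> FA A omega ->
  Pcond_omega E p A omega sigma = cluster_sign_law R omega sigma.
Proof.
move=> omegaE omegaFA; rewrite /Pcond_omega Pjoint_coupling_weight.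
under eq_bigr do rewrite Pjoint_coupling_weight.
rewrite (normalize_ratio _ (fun s => (omega, s))) => [/= | [w s]]; last first.
  exact: coupling_weight_ge0.
rewrite sum_coupling_weight_spins cluster_sign_lawE.
rewrite -(fmap_cluster_spins _ E_pairs _ omegaE).
rewrite (card_fmap _ E_pairs _ omegaE) natrX /coupling_weight omegaFA mul1r mulr1.
have PE_gt0 : 0 < PE p E omega by apply: PH_gt0 omegaE; apply: p_in01.
by rewrite [2 ^+ _ * _]mulrC -mulf_div divff ?mul1r // gt_eqF.
Qed.

Lemma Pjoint_edge_marginal omega :
  \sum_sigma Pjoint E p A omega sigma = cond_event (phi E p) (FA A) omega.
Proof.
under eq_bigr do rewrite Pjoint_coupling_weight.
rewrite sum_normalize_pair2 cond_eventE /phi normalizeMl => [|w]; last first.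
  by rewrite mulr_ge0 ?exprn_ge0 ?PE_ge0.
by congr normalize; apply/funext => w; rewrite sum_coupling_weight_spins.
Qed.

Lemma Pjoint_edge_conditional sigma omega :
  Pcond_sigma E p A sigma omega = cond_event (PH p (Sset E sigma)) (FA A) omega.
Proof.
rewrite /Pcond_sigma Pjoint_coupling_weight.
under eq_bigr do rewrite Pjoint_coupling_weight.
rewrite (normalize_ratio _ (fun w => (w, sigma))) => [/= | [w s]]; last first.
  exact: coupling_weight_ge0.
rewrite sum_coupling_weight_edges cond_eventE /normalize PH_eventE /coupling_weight.
rewrite -[(FA A omega)%:R * _ * _]mulrA PE_mul_fmap mulrCA -mulf_div.
by rewrite divff ?mul1r 1?[(FA A omega)%:R * _]mulrC // gt_eqF ?cut_weight_pJ_gt0.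
Qed.

End Coupling.

Theorem propositionB1 (R : realType) (V : finType) (E : {set {set V}})
  (J : {set V} -> R) (A : {set V})
  (HE : forall e, e \in E -> #|e| = 2%N)
  (HJ : forall e, e \in E -> 0 < J e)
  (HA : ~~ odd #|A|) :
  let p := pJ J in
  (* (a) *)
  ((forall sigma : spin_conf V,
      \sum_(omega : edge_set V) Pjoint E p A omega sigma = muA E J A sigma)
   /\ (forall omega : edge_set V, omega \subset E -> FA A omega ->
      forall sigma : spin_conf V,
        Pcond_omega E p A omega sigma = cluster_sign_law R omega sigma))
  /\
  (* (b) *)
  ((forall omega : edge_set V,
      \sum_(sigma : spin_conf V) Pjoint E p A omega sigma
      = cond_event (phi E p) (FA A) omega)
   /\ (forall sigma : spin_conf V, FA A (Sset E sigma) ->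
      forall omega : edge_set V,
        Pcond_sigma E p A sigma omega
        = cond_event (PH p (Sset E sigma)) (FA A) omega)).
Proof.
move=> p; split; split.
- exact: Pjoint_spin_marginal.
- by move=> omega omegaE omegaFA sigma; apply: Pjoint_spin_conditional.
- exact: Pjoint_edge_marginal.
- by move=> sigma _ omega; apply: Pjoint_edge_conditional.
Qed.
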